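(* Let $(G,\oplus)$ be a gyrogroup with identity $e$, and let $s\in G$ with $s\neq e$ and $s=\ominus s$. Then the L-Cayley graph $\mathrm{LCay}(G,\{s\})$ is vertex-transitive.
   Context: A gyrogroup is a nonempty set $G$ with a binary operation $\oplus$ such that: (i) there is a unique $e\in G$ with $e\oplus x=x=x\oplus e$ for all $x$; (ii) each $x\in G$ has a unique inverse $\ominus x$ with $\ominus x\oplus x=e=x\oplus(\ominus x)$; (iii) for all $x,y\in G$ there is an automorphism $\mathrm{gyr}[x,y]$ of $(G,\oplus)$ with $x\oplus(y\oplus z)=(x\oplus y)\oplus \mathrm{gyr}[x,y](z)$ for all $z\in G$; (iv) $\mathrm{gyr}[x\oplus y,y]=\mathrm{gyr}[x,y]$ for all $x,y$. For a subset $S\subseteq G$ with $e\notin S$, the L-Cayley graph $\mathrm{LCay}(G,S)$ is the directed graph with vertex set $G$ and a directed edge $u\to v$ iff $v=s\oplus u$ for some $s\in S$. A (directed) graph is (vertex-)transitive if for any two vertices $u,v$ there is a graph automorphism (a bijection of vertices preserving directed edges in both directions) sending $u$ to $v$. *)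

Definition bij {G : Type} (f : G -> G) : Prop :=
  exists g : G -> G, (forall x, g (f x) = x) /\ (forall x, f (g x) = x).

Definition groupoid_aut {G : Type} (op : G -> G -> G) (f : G -> G) : Prop :=
  bij f /\ forall a b, f (op a b) = op (f a) (f b).

Record is_gyrogroup {G : Type} (op : G -> G -> G) (e : G) (inv : G -> G)
    (gyr : G -> G -> G -> G) : Prop := {
  gyro_idl : forall x, op e x = x;
  gyro_idr : forall x, op x e = x;
  gyro_id_uniq : forall e', (forall x, op e' x = x /\ op x e' = x) -> e' = e;
  gyro_invl : forall x, op (inv x) x = e;
  gyro_invr : forall x, op x (inv x) = e;
  gyro_inv_uniq : forall x y, op y x = e -> op x y = e -> y = inv x;
  gyro_gyr_aut : forall x y, groupoid_aut op (gyr x y);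
  gyro_assoc : forall x y z, op x (op y z) = op (op x y) (gyr x y z);
  gyro_loop : forall x y z, gyr (op x y) y z = gyr x y z
}.

Definition LCay_edge {G : Type} (op : G -> G -> G) (S : G -> Prop) (u v : G) : Prop :=
  exists s, S s /\ v = op s u.

Definition graph_aut {G : Type} (E : G -> G -> Prop) (f : G -> G) : Prop :=
  bij f /\ forall u v, E u v <-> E (f u) (f v).

Definition vertex_transitive {G : Type} (E : G -> G -> Prop) : Prop :=
  forall u v : G, exists f, graph_aut E f /\ f u = v.

From Stdlib Require Import ClassicalEpsilon.

(* The L-Cayley graph LCay(G,{s}) has an edge u -> v exactly when v = s (+) u,
   so it is the functional graph of the left translation L_s : u |-> s (+) u.
   When s = (-)s and s <> e, this map is a fixed-point-free involution:
   - left cancellation (-)a (+) (a (+) z) = z holds in every gyrogroup, because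
     gyr[e,a] is the identity (it is an idempotent automorphism);
   - in every gyrogroup x (+) u = u forces x = e, since then gyr[x,u] is trivial.
   The graph of a fixed-point-free involution L is a disjoint union of
   2-cycles {u, L u}; it is vertex-transitive because, for any u and v, the map
   exchanging u <-> v and L u <-> L v (identity elsewhere) is an involutive
   bijection commuting with L. *)

Lemma vertex_transitive_ext {V : Type} (E E' : V -> V -> Prop) :
  (forall u v, E u v <-> E' u v) -> vertex_transitive E -> vertex_transitive E'.
Proof.
  intros HE Htr u v. destruct (Htr u v) as [f [[Hbij Hf] Hfu]].
  exists f; split; [split; [exact Hbij |] | exact Hfu].
  intros a b. rewrite <- !HE. apply Hf.
Qed.

Section InvolutionGraph.
Variable V : Type.
Variable L : V -> V.
Hypothesis L_invol : forall x, L (L x) = x.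
Hypothesis L_nofix : forall x, L x <> x.

Definition swap_pairs (u v x : V) : V :=
  if excluded_middle_informative (x = u) then v
  else if excluded_middle_informative (x = L u) then L v
  else if excluded_middle_informative (x = v) then u
  else if excluded_middle_informative (x = L v) then L u
  else x.

Ltac swap_cases :=
  unfold swap_pairs;
  repeat match goal with
         | |- context [excluded_middle_informative ?P] =>
             (* innermost tests first, so that no test mentions another one *)
             lazymatch P with
             | context [excluded_middle_informative _] => fail
             | _ => destruct (excluded_middle_informative P)
             end
         end;
  subst; try congruence.

Lemma swap_pairs_invol (u v x : V) : swap_pairs u v (swap_pairs u v x) = x.
Proof.
  pose proof (L_invol u); pose proof (L_invol v); pose proof (L_invol x);
  pose proof (L_nofix u); pose proof (L_nofix v); pose proof (L_nofix x).
  swap_cases.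
Qed.

Lemma swap_pairs_L (u v x : V) : swap_pairs u v (L x) = L (swap_pairs u v x).
Proof.
  pose proof (L_invol u); pose proof (L_invol v); pose proof (L_invol x);
  pose proof (L_nofix u); pose proof (L_nofix v); pose proof (L_nofix x).
  swap_cases.
Qed.

Lemma involution_graph_vertex_transitive : vertex_transitive (fun a b => b = L a).
Proof.
  intros u v. exists (swap_pairs u v). split.
  - split; [exists (swap_pairs u v); split; apply swap_pairs_invol |].
    intros a b; split; intro H.
    + subst b; apply swap_pairs_L.
    + rewrite <- swap_pairs_L in H.
      rewrite <- (swap_pairs_invol u v b), H, swap_pairs_invol. reflexivity.
  - unfold swap_pairs. destruct (excluded_middle_informative (u = u)); congruence.
Qed.
End InvolutionGraph.

Section GyrogroupFacts.
Variable G : Type.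
Variables (op : G -> G -> G) (e : G) (inv : G -> G) (gyr : G -> G -> G -> G).
Hypothesis Hg : is_gyrogroup op e inv gyr.

Lemma gyr_id_left (a z : G) : gyr e a z = z.
Proof.
  destruct Hg as [idl _ _ invl _ _ aut assoc loop].
  (* (-)a (+) (a (+) w) = gyr[(-)a,a] w = gyr[e,a] w by the loop property *)
  assert (Hcancel : forall w, op (inv a) (op a w) = gyr e a w).
  { intro w. rewrite assoc, invl, idl, <- loop, invl. reflexivity. }
  (* a (+) w = e (+) (a (+) w) = a (+) gyr[e,a] w *)
  assert (Hshift : forall w, op a w = op a (gyr e a w)).
  { intro w. rewrite <- (idl (op a w)), assoc, idl. reflexivity. }
  (* hence gyr[e,a] is idempotent; being injective, it is the identity *)
  assert (Hidem : gyr e a (gyr e a z) = gyr e a z).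
  { rewrite <- (Hcancel (gyr e a z)), <- Hshift. apply Hcancel. }
  destruct (aut e a) as [[g [Hg_left _]] _].
  rewrite <- (Hg_left (gyr e a z)), Hidem, Hg_left. reflexivity.
Qed.

Lemma left_cancel (a z : G) : op (inv a) (op a z) = z.
Proof.
  destruct Hg as [idl _ _ invl _ _ _ assoc loop].
  rewrite assoc, invl, idl, <- loop, invl. apply gyr_id_left.
Qed.

Lemma left_translation_fixpoint (x u : G) : op x u = u -> x = e.
Proof.
  destruct Hg as [idl idr _ _ invr _ _ assoc loop]. intro Hxu.
  (* gyr[x,u] = gyr[x (+) u, u] = gyr[u,u] = gyr[e (+) u, u] = gyr[e,u] = id *)
  assert (Htriv : forall z, gyr x u z = z).
  { intro z. rewrite <- loop, Hxu, <- (idl u) at 1. rewrite loop. apply gyr_id_left. }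
  pose proof (assoc x u (inv u)) as H.
  rewrite Hxu, Htriv, invr, idr in H. exact H.
Qed.
End GyrogroupFacts.

Lemma LCay_singleton_edge {G : Type} (op : G -> G -> G) (s u v : G) :
  LCay_edge op (fun x => x = s) u v <-> v = op s u.
Proof.
  unfold LCay_edge; split.
  - intros [x [-> Hv]]. exact Hv.
  - intro Hv. exists s; split; [reflexivity | exact Hv].
Qed.

Theorem mainTheorem1 (G : Type) (op : G -> G -> G) (e : G) (inv : G -> G)
    (gyr : G -> G -> G -> G) (Hg : is_gyrogroup op e inv gyr)
    (s : G) (hse : s <> e) (hsinv : s = inv s) :
  vertex_transitive (LCay_edge op (fun x => x = s)).
Proof.
  assert (Hinvol : forall y, op s (op s y) = y).
  { intro y. rewrite hsinv at 1. exact (left_cancel G op e inv gyr Hg s y). }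
  assert (Hnofix : forall y, op s y <> y).
  { intros y Hy. exact (hse (left_translation_fixpoint G op e inv gyr Hg s y Hy)). }
  apply (vertex_transitive_ext (fun a b => b = op s a)).
  - intros u v. symmetry. apply LCay_singleton_edge.
  - exact (involution_graph_vertex_transitive G (op s) Hinvol Hnofix).
Qed.
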